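(* Let $\{B_n(\mathbf{t})\}_{n\in\mathbb{N}}$ be a solution of the Volterra lattice hierarchy, i.e. of the compatible equations $$\partial_{t_{2k}}B_n=B_n\big(V^{(2k)}_{n+1}-V^{(2k)}_{n-1}\big),$$ where $V^{(2)}_n=B_n$, $V^{(4)}_n=V^{(2)}_n\big(V^{(2)}_{n-1}+V^{(2)}_n+V^{(2)}_{n+1}\big)$, $V^{(6)}_n=V^{(2)}_n\big(V^{(2)}_{n-1}V^{(2)}_{n+1}+V^{(4)}_{n-1}+V^{(4)}_n+V^{(4)}_{n+1}\big)$ (so that in particular $\partial_{t_2}B_n=B_n(B_{n+1}-B_{n-1})$). For a given $n\in\mathbb{N}$ set $\phi(\mathbf{t})=B_n(\mathbf{t})$, $\psi(\mathbf{t})=B_{n-1}(\mathbf{t})$, and write $x=t_2$, $y=t_4$, $t=t_6$. Then $\phi,\psi$ satisfy the two compatible systems of $(1+1)$-dimensional conservation laws $$\phi_y=\big(\phi^2+2\phi\psi+\phi_x\big)_x,\qquad \psi_y=\big(\psi^2+2\phi\psi-\psi_x\big)_x,$$ and $$\phi_t=\big(\phi^3+3(\psi+2\phi)\phi\psi+3(\phi+\psi)\phi_x+\phi_{xx}\big)_x,\qquad \psi_t=\big(\psi^3+3(\phi+2\psi)\phi\psi-3(\phi+\psi)\psi_x+\psi_{xx}\big)_x.$$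
   Context: $\mathbf{t}=(t_2,t_4,t_6,\dots)$ denotes the even coupling constants (times of the hierarchy); subscripts $x,y,t$ denote partial derivatives with respect to $t_2,t_4,t_6$ respectively. *)

From Stdlib Require Import Reals ZArith.
From Coquelicot Require Import Coquelicot.
Open Scope R_scope.

(* A function of the three times x = t_2, y = t_4, t = t_6
   (the higher times t_8, t_10, ... are held fixed). *)
Definition state := R -> R -> R -> R.

Definition dx (f : state) : state := fun x y t => Derive (fun s => f s y t) x.
Definition dy (f : state) : state := fun x y t => Derive (fun s => f x s t) y.
Definition dt (f : state) : state := fun x y t => Derive (fun s => f x y s) t.

Definition V2 (B : Z -> state) (n : Z) : state := B n.
Definition V4 (B : Z -> state) (n : Z) : state := fun x y t =>
  V2 B n x y t * (V2 B (n - 1)%Z x y t + V2 B n x y t + V2 B (n + 1)%Z x y t).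
Definition V6 (B : Z -> state) (n : Z) : state := fun x y t =>
  V2 B n x y t * (V2 B (n - 1)%Z x y t * V2 B (n + 1)%Z x y t
                  + V4 B (n - 1)%Z x y t + V4 B n x y t + V4 B (n + 1)%Z x y t).

Definition volterra_hierarchy (B : Z -> state) : Prop :=
  forall (n : Z) (x y t : R),
    is_derive (fun s => B n s y t) x
      (B n x y t * (V2 B (n + 1)%Z x y t - V2 B (n - 1)%Z x y t)) /\
    is_derive (fun s => B n x s t) y
      (B n x y t * (V4 B (n + 1)%Z x y t - V4 B (n - 1)%Z x y t)) /\
    is_derive (fun s => B n x y s) t
      (B n x y t * (V6 B (n + 1)%Z x y t - V6 B (n - 1)%Z x y t)).

(** Along x = t_2 every B_m obeys the Volterra lattice, so the x-derivative of
    each flux, computed with the chain rule and the lattice equation (twice for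
    the flux terms that already contain B_xx), is a polynomial in the B_m.  The
    hierarchy gives phi_y, psi_y, phi_t, psi_t as polynomials in the B_m too, and
    each conservation law reduces to a polynomial identity. *)
From Stdlib Require Import Reals ZArith.
From Coquelicot Require Import Coquelicot.
Open Scope R_scope.

Lemma dy_volterra (B : Z -> state) (HB : volterra_hierarchy B) (m : Z) (x y t : R) :
  dy (B m) x y t = B m x y t * (V4 B (m + 1)%Z x y t - V4 B (m - 1)%Z x y t).
Proof. apply is_derive_unique, HB. Qed.

Lemma dt_volterra (B : Z -> state) (HB : volterra_hierarchy B) (m : Z) (x y t : R) :
  dt (B m) x y t = B m x y t * (V6 B (m + 1)%Z x y t - V6 B (m - 1)%Z x y t).
Proof. apply is_derive_unique, HB. Qed.

Section VolterraLattice.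

Variables (B : Z -> state) (y t : R).

Hypothesis volterra_x : forall (m : Z) (s : R),
  is_derive (fun u => B m u y t) s (B m s y t * (B (m + 1)%Z s y t - B (m - 1)%Z s y t)).

Lemma Derive_volterra_x (m : Z) (s : R) :
  Derive (fun u => B m u y t) s = B m s y t * (B (m + 1)%Z s y t - B (m - 1)%Z s y t).
Proof. apply is_derive_unique, volterra_x. Qed.

(* Indices are n followed by steps of +1 and -1; cancelling adjacent opposite
   steps gives each a unique normal form, so [ring] sees equal B-atoms. *)
Ltac simplify_Z_indices := repeat (rewrite Z.sub_add || rewrite Z.add_simpl_r).

Ltac derive_lattice_polynomial :=
  auto_derive;
  [ repeat split; eexists; apply volterra_x
  | rewrite !Derive_volterra_x; unfold V6, V4, V2; simplify_Z_indices; ring ].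

Lemma Derive2_volterra_x (m : Z) (s : R) :
  Derive (fun u => Derive (fun v => B m v y t) u) s =
  B m s y t * ((B (m + 1)%Z s y t - B (m - 1)%Z s y t) ^ 2
               + B (m + 1)%Z s y t * (B (m + 1 + 1)%Z s y t - B m s y t)
               - B (m - 1)%Z s y t * (B m s y t - B (m - 1 - 1)%Z s y t)).
Proof.
  rewrite (Derive_ext _ (fun u => B m u y t * (B (m + 1)%Z u y t - B (m - 1)%Z u y t)))
    by apply Derive_volterra_x.
  apply is_derive_unique; derive_lattice_polynomial.
Qed.

(* The function argument of [is_derive_ext] is left as an evar, solved by the
   final [reflexivity]; the guard keeps [rewrite] from instantiating that evar. *)
Ltac expand_dx :=
  eapply is_derive_ext;
  [ intro; symmetry; unfold dx;
    try lazymatch goal with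
        | |- context [Derive (fun _ => Derive _ _) _] => rewrite Derive2_volterra_x
        end;
    rewrite Derive_volterra_x; reflexivity
  | ].

Lemma conservation_law_y_phi (n : Z) (x : R) :
  is_derive (fun s => B n s y t ^ 2 + 2 * B n s y t * B (n - 1)%Z s y t + dx (B n) s y t)
    x (B n x y t * (V4 B (n + 1)%Z x y t - V4 B (n - 1)%Z x y t)).
Proof. expand_dx; derive_lattice_polynomial. Qed.

Lemma conservation_law_y_psi (n : Z) (x : R) :
  is_derive (fun s => B (n - 1)%Z s y t ^ 2 + 2 * B n s y t * B (n - 1)%Z s y t
                      - dx (B (n - 1)%Z) s y t)
    x (B (n - 1)%Z x y t * (V4 B (n - 1 + 1)%Z x y t - V4 B (n - 1 - 1)%Z x y t)).
Proof. expand_dx; derive_lattice_polynomial. Qed.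

Lemma conservation_law_t_phi (n : Z) (x : R) :
  is_derive (fun s => B n s y t ^ 3
                      + 3 * (B (n - 1)%Z s y t + 2 * B n s y t) * B n s y t * B (n - 1)%Z s y t
                      + 3 * (B n s y t + B (n - 1)%Z s y t) * dx (B n) s y t
                      + dx (dx (B n)) s y t)
    x (B n x y t * (V6 B (n + 1)%Z x y t - V6 B (n - 1)%Z x y t)).
Proof. expand_dx; derive_lattice_polynomial. Qed.

Lemma conservation_law_t_psi (n : Z) (x : R) :
  is_derive (fun s => B (n - 1)%Z s y t ^ 3
                      + 3 * (B n s y t + 2 * B (n - 1)%Z s y t) * B n s y t * B (n - 1)%Z s y t
                      - 3 * (B n s y t + B (n - 1)%Z s y t) * dx (B (n - 1)%Z) s y t
                      + dx (dx (B (n - 1)%Z)) s y t)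
    x (B (n - 1)%Z x y t * (V6 B (n - 1 + 1)%Z x y t - V6 B (n - 1 - 1)%Z x y t)).
Proof. expand_dx; derive_lattice_polynomial. Qed.

End VolterraLattice.

Theorem lemma2p3 (B : Z -> state) (n : Z) (HB : volterra_hierarchy B) :
  let phi := B n in
  let psi := B (n - 1)%Z in
  forall x y t : R,
    is_derive (fun s => phi s y t ^ 2 + 2 * phi s y t * psi s y t + dx phi s y t)
      x (dy phi x y t) /\
    is_derive (fun s => psi s y t ^ 2 + 2 * phi s y t * psi s y t - dx psi s y t)
      x (dy psi x y t) /\
    is_derive (fun s => phi s y t ^ 3
                        + 3 * (psi s y t + 2 * phi s y t) * phi s y t * psi s y t
                        + 3 * (phi s y t + psi s y t) * dx phi s y t
                        + dx (dx phi) s y t)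
      x (dt phi x y t) /\
    is_derive (fun s => psi s y t ^ 3
                        + 3 * (phi s y t + 2 * psi s y t) * phi s y t * psi s y t
                        - 3 * (phi s y t + psi s y t) * dx psi s y t
                        + dx (dx psi) s y t)
      x (dt psi x y t).
Proof.
  intros phi psi x y t; subst phi psi.
  pose proof (fun m s => proj1 (HB m s y t)) as volterra_x.
  rewrite !(dy_volterra B HB), !(dt_volterra B HB).
  split; [|split; [|split]].
  - exact (conservation_law_y_phi B y t volterra_x n x).
  - exact (conservation_law_y_psi B y t volterra_x n x).
  - exact (conservation_law_t_phi B y t volterra_x n x).
  - exact (conservation_law_t_psi B y t volterra_x n x).
Qed.
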